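(* For every $i\ge0$, the generating function $g_i(z)=\sum_{n\ge0}b_{n,i}z^n$ of reversed partial ternary paths ending at level $i$ ($b_{n,i}$ the number of such paths of length $n$, no upper height bound) is $$g_i(z)=\frac{(-1)^i z^{2i}}{(1-t)^{i+1}}\sum_{0\le k\le i/2}(-1)^k\binom{i-k}{k}\frac{1}{t^k(t-1)^{i-k}},$$ equivalently $$g_i(z)=\frac{(-1)^iz^{2i}}{(1-t)^{i+1}(3t-4)}\Big[(t-2)(\mu_2^i+\mu_3^i)+(\mu_2^{i-1}+\mu_3^{i-1})\Big],$$ where $t$ is the formal power series in $x=z^3$ with $t(1-t)^2=x$, $t=x+2x^2+\cdots$, and $\mu_{2,3}=\dfrac{t\pm\sqrt{4t-3t^2}}{2t(t-1)}$. In particular $g_i(z)$ has nonzero coefficients only at powers $z^n$ with $n+i\equiv0\pmod 3$.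
   Context: A reversed partial ternary path of length $n$ is a lattice path $(0,c_0),\dots,(n,c_n)$ with $c_0=0$, steps $(1,2)$ or $(1,-1)$, and all $c_j\ge0$; it ends at level $c_n$. *)

From HB Require Import structures.
From mathcomp Require Import all_boot all_order all_algebra.
Set Implicit Arguments. Unset Strict Implicit. Unset Printing Implicit Defensive.
Import Order.TTheory GRing.Theory Num.Theory.
Local Open Scope ring_scope.

(* A path of length n is encoded by its step sequence: true = (1,2), false = (1,-1). *)
Definition step (c : int) (b : bool) : int := if b then c + 2 else c - 1.

(* the levels c_1, ..., c_n (c_0 = 0 is prepended below) *)
Definition levels (s : seq bool) : seq int := scanl step 0 s.

Definition valid_path (s : seq bool) : bool := all (fun c => 0 <= c) (0 :: levels s).

Definition end_level (s : seq bool) : int := foldl step 0 s.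

Definition b (n i : nat) : nat :=
  #|[pred s : n.-tuple bool | valid_path s && (end_level s == i%:Z)]|.

Definition series := nat -> int.

Definition scst (c : int) : series := fun n => if n == 0%N then c else 0.
Definition sz : series := fun n => if n == 1%N then 1 else 0.
Definition sadd (f g : series) : series := fun n => f n + g n.
Definition sopp (f : series) : series := fun n => - f n.
Definition ssub (f g : series) : series := sadd f (sopp g).
Definition sscale (c : int) (f : series) : series := fun n => c * f n.
Definition smul (f g : series) : series :=
  fun n => \sum_(k < n.+1) f k * g (n - k)%N.
Definition spow (f : series) (m : nat) : series := iter m (smul f) (scst 1).
Definition ssum (m : nat) (F : nat -> series) : series :=
  fun n => \sum_(k < m) F k n.

Definition g (i : nat) : series := fun n => (b n i)%:Z.

(** With nu_{2,3} := mu_{2,3} * t(t-1), the nu's are the roots of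
   Y^2 - t Y + t(t-1) = 0, so P_i := nu_2^i + nu_3^i = (mu_2^i + mu_3^i)(t(t-1))^i
   satisfies P_0 = 2, P_1 = t, P_{i+2} = t P_{i+1} - t(t-1) P_i. *)
Fixpoint Ppair (t : series) (i : nat) : series * series :=
  match i with
  | 0 => (scst 2, t)
  | i'.+1 => let (p0, p1) := Ppair t i' in
             (p1, ssub (smul t p1) (smul (smul t (ssub t (scst 1))) p0))
  end.
Definition Psum (t : series) (i : nat) : series := (Ppair t i).1.

(* Q_i := (mu_2^{i-1} + mu_3^{i-1}) (t(t-1))^i ; for i = 0, mu_2^{-1}+mu_3^{-1} = t *)
Definition Qsum (t : series) (i : nat) : series :=
  match i with
  | 0 => t
  | i'.+1 => smul (smul t (ssub t (scst 1))) (Psum t i')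
  end.

From HB Require Import structures.
From mathcomp Require Import all_boot all_order all_algebra.
From mathcomp Require Import boolp ring zify.
Set Implicit Arguments.
Unset Strict Implicit.
Unset Printing Implicit Defensive.
Import GRing.Theory.
Local Open Scope ring_scope.

(* Splitting off the last step gives b(n+1,i) = b(n,i+1) + b(n,i-2), that is
   g_0 = 1 + z g_1, g_1 = z g_2 and g_(i+2) = z g_(i+3) + z g_i, and this system
   determines the g_i.  Write t = z^3 s and w = 1 - t, so that s w^2 = 1.  The
   Fibonacci polynomials F_i = sum_k C(i-k,k) t^(i-k) w^k, which satisfy
   F_(i+2) = t F_(i+1) + t w F_i, make (s w) z^-i F_i a solution of the system,
   hence z^i g_i w = F_i.  The first closed form is F_i with the powers of t
   collected; for the second, the power sums of the roots of Y^2 - t Y - t w obey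
   the same recurrence as F_i. *)

(** * The ring of formal power series *)

(* An alias of [series] carrying the ring structure; the multiplication axioms
   are inherited from {poly int} by truncation. *)
Definition ser := series.
HB.instance Definition _ := Choice.on ser.

Lemma saddA : associative (sadd : ser -> ser -> ser).
Proof. by move=> f g h; apply: funext => n; rewrite /sadd addrA. Qed.

Lemma saddC : commutative (sadd : ser -> ser -> ser).
Proof. by move=> f g; apply: funext => n; rewrite /sadd addrC. Qed.

Lemma sadd0 : left_id (scst 0 : ser) sadd.
Proof. by move=> f; apply: funext => -[|n]; rewrite /sadd /scst add0r. Qed.

Lemma saddN : left_inverse (scst 0 : ser) sopp sadd.
Proof. by move=> f; apply: funext => -[|n]; rewrite /sadd /sopp /scst addNr. Qed.

HB.instance Definition _ := GRing.isZmodule.Build ser saddA saddC sadd0 saddN.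

Definition trunc (N : nat) (f : series) : {poly int} := \poly_(k < N) f k.

Lemma smul_truncE N (f g : series) n : (n < N)%N -> smul f g n = (trunc N f * trunc N g)`_n.
Proof.
move=> ltnN; rewrite coefM; apply: eq_bigr => k _; rewrite !coef_poly.
by rewrite !(leq_ltn_trans _ ltnN) // ?leq_subr // -ltnS.
Qed.

Lemma smulC : commutative (smul : ser -> ser -> ser).
Proof. by move=> f g; apply: funext => n; rewrite !(@smul_truncE n.+1) // mulrC. Qed.

Lemma smulA : associative (smul : ser -> ser -> ser).
Proof.
have smul3E f g h n : smul (smul f g) h n = (trunc n.+1 f * trunc n.+1 g * trunc n.+1 h)`_n.
  rewrite {1}/smul coefM; apply: eq_bigr => k _.
  by rewrite (@smul_truncE n.+1) // coef_poly ltnS leq_subr.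
by move=> f g h; apply: funext => n; rewrite smul3E smulC smul3E mulrC mulrA.
Qed.

Lemma smul1 : left_id (scst 1 : ser) smul.
Proof.
move=> f; apply: funext => n; rewrite (@smul_truncE n.+1) //.
have -> : trunc n.+1 (scst 1) = 1.
  by apply/polyP => -[|k]; rewrite coef_poly coefC /scst //=; case: ifP.
by rewrite mul1r coef_poly ltnSn.
Qed.

Lemma smulDl : left_distributive (smul : ser -> ser -> ser) sadd.
Proof.
move=> f g h; apply: funext => n.
by rewrite /smul /sadd -big_split; apply: eq_bigr => k _; rewrite mulrDl.
Qed.

Lemma scst1_neq0 : (scst 1 : ser) != scst 0.
Proof. by apply/eqP => /(congr1 (fun f => f 0%N)). Qed.

HB.instance Definition _ :=
  GRing.Zmodule_isComNzRing.Build ser smulA smulC smul1 smulDl scst1_neq0.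

Lemma coef_add (f g : ser) n : (f + g) n = f n + g n. Proof. by []. Qed.
Lemma coef1 n : (1 : ser) n = (n == 0)%:R. Proof. by case: n. Qed.

Lemma scstD (a b : int) : scst (a + b) = (scst a : ser) + scst b.
Proof. by apply: funext => -[|n]; rewrite coef_add /scst ?addr0. Qed.

Lemma scstN (a : int) : scst (- a) = - (scst a : ser).
Proof. by apply: funext => -[|n]; rewrite /scst /= /sopp ?oppr0. Qed.

Lemma scst1 : scst 1 = 1 :> ser. Proof. by []. Qed.

Lemma scst_int (c : int) : scst c = (c%:~R : ser).
Proof.
have scst_nat (j : nat) : scst j%:R = (j%:R : ser).
  by elim: j => // j IH; rewrite -addn1 !natrD scstD IH scst1.
case: c => m; first by rewrite -{1}natz scst_nat.
by rewrite NegzE scstN -{1}natz scst_nat mulrNz.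
Qed.

Lemma sscaleE c (f : ser) : sscale c f = c%:~R * f.
Proof.
rewrite -scst_int; apply: funext => n.
change (c * f n = smul (scst c) f n); rewrite /smul big_ord_recl subn0.
by rewrite big1 ?addr0 // => k _; rewrite /scst mul0r.
Qed.

Lemma spowE (f : ser) m : spow f m = f ^+ m.
Proof. by elim: m => // m IH; rewrite exprS -IH. Qed.

Lemma ssumE m (F : nat -> series) : ssum m F = \sum_(k < m) (F k : ser).
Proof.
apply: funext => n; rewrite /ssum; elim: m => [|m IH]; first by rewrite !big_ord0; case: n.
by rewrite !big_ord_recr /= IH.
Qed.

Lemma smulE (f g : ser) : smul f g = f * g. Proof. by []. Qed.
Lemma saddE (f g : ser) : sadd f g = f + g. Proof. by []. Qed.
Lemma ssubE (f g : ser) : ssub f g = f - g. Proof. by []. Qed.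

Definition sseriesE := (smulE, saddE, ssubE, spowE, ssumE, sscaleE, scst1, scst_int).

Notation z := (sz : ser).

Lemma coef_mulz (f : ser) n : (z * f) n = if n is n'.+1 then f n' else 0.
Proof.
rewrite -smulE /smul big_ord_recl /sz mul0r add0r.
case: n => [|n]; first by rewrite big_ord0.
rewrite big_ord_recl /= mul1r subSS subn0 big1 ?addr0 // => k _.
by rewrite mul0r.
Qed.

Lemma mulzI : injective (fun f : ser => z * f).
Proof.
move=> f g /= fg; apply: funext => n.
by have := congr1 (fun u : ser => u n.+1) fg; rewrite !coef_mulz.
Qed.

Lemma mulzXI i : injective (fun f : ser => z ^+ i * f).
Proof. by elim: i => [f g|i IH f g]; rewrite ?mul1r // exprS -!mulrA => /mulzI /IH. Qed.

Definition shift (f : ser) : ser := fun n => f n.+1.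

Lemma shiftK (f : ser) : f 0%N = 0 -> z * shift f = f.
Proof. by move=> f0; apply: funext => n; rewrite coef_mulz; case: n. Qed.

Lemma end_level_rcons s x : end_level (rcons s x) = step (end_level s) x.
Proof. by rewrite /end_level foldl_rcons. Qed.

Lemma valid_path_rcons s x :
  valid_path (rcons s x) = valid_path s && (0 <= step (end_level s) x).
Proof.
rewrite /valid_path /levels scanl_rcons -rcons_cons all_rcons andbC.
by rewrite -/(end_level (rcons s x)) end_level_rcons.
Qed.

Lemma valid_path_end s : valid_path s -> 0 <= end_level s.
Proof.
elim/last_ind: s => // s x _.
by rewrite valid_path_rcons end_level_rcons => /andP[].
Qed.

Lemma card_tuple_rcons n (P : pred (seq bool)) :
  #|[pred s : n.+1.-tuple bool | P s]| =
  (#|[pred s : n.-tuple bool | P (rcons s true)]| +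
   #|[pred s : n.-tuple bool | P (rcons s false)]|)%N.
Proof.
pose h (p : n.-tuple bool * bool) : n.+1.-tuple bool := rcons_tuple p.1 p.2.
have h_inj : injective h by move=> [s x] [s' x'] /(congr1 val) /rcons_inj [/val_inj -> ->].
have h_bij : bijective h.
  by apply: (inj_card_bij h_inj); rewrite card_prod !card_tuple card_bool expnS mulnC.
rewrite -!sum1_card (reindex h) /=; last exact: onW_bij.
rewrite big_mkcond -(pair_bigA _ (fun (s : n.-tuple bool) x => if P (rcons s x) then 1 else 0)%N) /=.
by rewrite exchange_big big_bool -!big_mkcond.
Qed.

Lemma card_paths_rcons n x (P Q : pred int) :
  (forall c, 0 <= c -> (0 <= step c x) && P (step c x) = Q c) ->
  #|[pred s : n.-tuple bool | valid_path (rcons s x) && P (end_level (rcons s x))]| =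
  #|[pred s : n.-tuple bool | valid_path s && Q (end_level s)]|.
Proof.
move=> PQ; apply: eq_card => s; rewrite !inE valid_path_rcons end_level_rcons -andbA.
by case V: (valid_path s) => //=; rewrite PQ ?valid_path_end.
Qed.

Lemma b0 i : b 0 i = (i == 0)%N.
Proof.
case: i => [|i]; rewrite /b.
  by rewrite (@eq_card _ _ predT) ?card_tuple // => s; rewrite (tuple0 s).
by apply: eq_card0 => s; rewrite (tuple0 s).
Qed.

Lemma bS n i : b n.+1 i = (b n i.+1 + if i is i'.+2 then b n i' else 0)%N.
Proof.
rewrite /b (card_tuple_rcons n (fun s => valid_path s && (end_level s == i%:Z))) addnC.
congr addn.
  apply: (@card_paths_rcons n false (pred1 i%:Z) (pred1 i.+1%:Z)) => c c0 /=.
  by rewrite /step; apply/idP/idP; lia.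
case: i => [|[|i]]; last first.
  apply: (@card_paths_rcons n true (pred1 i.+2%:Z) (pred1 i%:Z)) => c c0 /=.
  by rewrite /step; apply/idP/idP; lia.
all: rewrite (@card_paths_rcons n true (pred1 _) pred0) => [|c c0 /=].
all: by [apply: eq_card0 => s; rewrite !inE andbF | rewrite /step; apply/negP; lia].
Qed.

Lemma b_mod3 n i : ((n + i) %% 3 != 0)%N -> b n i = 0%N.
Proof.
elim: n i => [|n IH] i; first by rewrite b0 add0n; case: i.
rewrite bS => ni3; rewrite IH; last by rewrite -addSnnS.
case: i ni3 => [|[|i]] ni3 //; rewrite IH //.
by move: ni3; apply: contra => /eqP ?; apply/eqP; lia.
Qed.

(** * Bivariate Fibonacci polynomials *)

Section Fibonacci.
Variables (R : comRingType) (a c : R).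

Definition fibonacci_rec (u : nat -> R) := forall i, u i.+2 = a * u i.+1 + a * c * u i.

Lemma eq_fibonacci_rec (u v : nat -> R) :
  fibonacci_rec u -> fibonacci_rec v -> u 0%N = v 0%N -> u 1%N = v 1%N -> u =1 v.
Proof.
move=> urec vrec uv0 uv1 i; suff [] : u i = v i /\ u i.+1 = v i.+1 by [].
by elim: i => [|i [IH1 IH2]]; split; rewrite // urec vrec IH1 IH2.
Qed.

Definition fibonacci_poly (i : nat) : R :=
  \sum_(0 <= k < i.+1) 'C(i - k, k)%:R * a ^+ (i - k) * c ^+ k.

Lemma fibonacci_poly0 : fibonacci_poly 0 = 1.
Proof. by rewrite /fibonacci_poly big_nat1 bin0 mul1r !expr0 mulr1. Qed.

Lemma fibonacci_poly1 : fibonacci_poly 1 = a.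
Proof.
rewrite /fibonacci_poly big_nat_recr // big_nat1 /= bin0 bin_small //.
by rewrite !mul0r addr0 mul1r expr0 mulr1.
Qed.

Lemma fibonacci_polyP : fibonacci_rec fibonacci_poly.
Proof.
move=> i; rewrite /fibonacci_poly big_nat_recl // [in a * _]big_nat_recl //.
rewrite big_nat_recr //= !subn0 !bin0 !expr0 !mulr1 !subSS subnn bin_small //.
rewrite !mul0r addr0 !mul1r mulrDr -addrA -exprS; congr (_ + _).
rewrite !mulr_sumr -big_split /=; apply: eq_big_nat => k /andP[_ lt_k_i].
rewrite !subSS (_ : (i.+1 - k = (i - k).+1)%N); last by lia.
by rewrite binS natrD !exprS; ring.
Qed.

(* Multiplying by a^(i/2) makes every exponent of a in the sum nonnegative. *)
Lemma fibonacci_poly_half i :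
  a ^+ i./2 * fibonacci_poly i =
  a ^+ i * \sum_(k < i./2.+1) 'C(i - k, k)%:R * (a ^+ (i./2 - k) * c ^+ k).
Proof.
have le_half : (i./2 < i.+1)%N by rewrite ltnS -divn2 leq_div.
rewrite /fibonacci_poly big_mkord.
rewrite (big_ord_widen i.+1 (fun k => 'C(i - k, k)%:R * (a ^+ (i./2 - k) * c ^+ k)) le_half).
rewrite !mulr_sumr [RHS]big_mkcond; apply: eq_bigr => k _; case: ifP => lt_k_half.
  have exp_a : (i./2 + (i - k) = i + (i./2 - k))%N by lia.
  transitivity ('C(i - k, k)%:R * a ^+ (i./2 + (i - k)) * c ^+ k); first by rewrite exprD; ring.
  by rewrite exp_a exprD; ring.
by rewrite bin_small ?mul0r ?mulr0 //; have := ltn_ord k; lia.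
Qed.
End Fibonacci.

Lemma g_unique (G : nat -> ser) :
  G 0%N = 1 + z * G 1%N -> G 1%N = z * G 2%N ->
  (forall i, G i.+2 = z * G i.+3 + z * G i) -> forall i, g i = G i.
Proof.
move=> G0 G1 GS i; apply: funext => n; elim: n i => [|n IH] i.
  rewrite /g b0; case: i => [|[|i]].
  - by rewrite G0 coef_add coef1 coef_mulz.
  - by rewrite G1 coef_mulz.
  - by rewrite GS coef_add !coef_mulz.
rewrite /g bS PoszD; case: i => [|[|i]].
- by rewrite G0 coef_add coef1 coef_mulz -IH addr0.
- by rewrite G1 coef_mulz -IH addr0.
- by rewrite GS coef_add !coef_mulz -!IH.
Qed.

Section Solution.
Variables s w : ser.
Hypothesis s_mul_w2 : s * w ^+ 2 = 1.
Hypothesis w_def : w = 1 - z ^+ 3 * s.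

Fixpoint scaled_fib (i : nat) : ser :=
  match i with
  | 0 => 1
  | 1 => z ^+ 2 * s
  | (i'.+1 as j).+1 => z ^+ 2 * s * scaled_fib j + z * s * w * scaled_fib i'
  end.

Lemma scaled_fibSS i :
  scaled_fib i.+2 = z ^+ 2 * s * scaled_fib i.+1 + z * s * w * scaled_fib i.
Proof. by []. Qed.

Lemma scaled_fibE i : z ^+ i * scaled_fib i = fibonacci_poly (z ^+ 3 * s) w i.
Proof.
apply: (@eq_fibonacci_rec _ (z ^+ 3 * s) w (fun i => z ^+ i * scaled_fib i)) => [j|||].
- by rewrite scaled_fibSS !exprS; ring.
- exact: fibonacci_polyP.
- by rewrite fibonacci_poly0 mul1r.
- by rewrite fibonacci_poly1 [scaled_fib 1]/=; ring.
Qed.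

Lemma g_mul_w i : (g i : ser) * w = scaled_fib i.
Proof.
have -> : g i = s * w * scaled_fib i.
  apply: (@g_unique (fun i => s * w * scaled_fib i)) => [||j].
  - transitivity (s * w ^+ 2 + z * (s * w * (z ^+ 2 * s))); last by rewrite s_mul_w2.
    by rewrite /= w_def; ring.
  - by rewrite /= w_def; ring.
  - by rewrite !scaled_fibSS -[s * w * scaled_fib j]mul1r -{1}s_mul_w2 w_def; ring.
by rewrite -mulrA mulrCA -mulrA -expr2 s_mul_w2 mulr1.
Qed.

End Solution.

Definition div_z3 (f : ser) : ser := shift (shift (shift f)).

(* Reading off the low coefficients of t = z^3 + t^2 (2 - t) shows that t is divisible by z^3. *)
Lemma div_z3K (t : ser) : t 0%N = 0 -> t * (1 - t) ^+ 2 = z ^+ 3 -> z ^+ 3 * div_z3 t = t.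
Proof.
move=> t0 t_cubic.
have t_eq : t = z ^+ 3 + t ^+ 2 * (2%:R - t) by rewrite -t_cubic; ring.
set u := shift t; have tu : t = z * u by rewrite shiftK.
have u0 : u 0%N = 0.
  have : z * u = z * (z * (z + u ^+ 2 * (2%:R - t))) by rewrite -tu {1}t_eq tu; ring.
  by move/mulzI => ->; rewrite coef_mulz.
set v := shift u; have uv : u = z * v by rewrite shiftK.
have v0 : v 0%N = 0.
  have : z * (z * v) = z * (z * (z * (1 + z * v ^+ 2 * (2%:R - t)))).
    by rewrite -uv -tu {1}t_eq tu uv; ring.
  by move=> /mulzI /mulzI ->; rewrite coef_mulz.
have vs : v = z * shift v by rewrite shiftK.
by rewrite /div_z3 -/u -/v [RHS]tu uv {2}vs; ring.
Qed.

Lemma gf_fibonacci (t : ser) : t 0%N = 0 -> t * (1 - t) ^+ 2 = z ^+ 3 ->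
  forall i, z ^+ i * g i * (1 - t) = fibonacci_poly t (1 - t) i.
Proof.
move=> t0 t_cubic i; have tK := div_z3K t0 t_cubic.
have s_mul_w2 : div_z3 t * (1 - t) ^+ 2 = 1.
  by apply: (@mulzXI 3); rewrite /= mulrA tK t_cubic mulr1.
have w_def : 1 - t = 1 - z ^+ 3 * div_z3 t by rewrite tK.
by rewrite -mulrA (g_mul_w s_mul_w2 w_def) scaled_fibE tK.
Qed.

Section PowerSums.
Variable t : ser.
Local Notation P i := (Psum t i : ser).
Local Notation Q i := (Qsum t i : ser).

Lemma PsumSS i : P i.+2 = t * P i.+1 - t * (t - 1) * P i.
Proof. by rewrite /Psum /=; case: (Ppair t i). Qed.

Lemma Psum0 : P 0 = 2%:R.
Proof. by rewrite /Psum /= scst_int. Qed.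

Lemma Psum1 : P 1 = t. Proof. by []. Qed.

Lemma QsumS i : Q i.+1 = t * (t - 1) * P i. Proof. by []. Qed.

Lemma Qsum_Psum i : Q i = t * P i - P i.+1.
Proof.
case: i => [|i]; last by rewrite PsumSS QsumS; ring.
by rewrite Psum0 Psum1 /=; ring.
Qed.

(* With w = 1 - t, the recurrence of the P i reads P (i+2) = t P (i+1) + t w P i. *)
Lemma Psum_fibonacci i :
  (t - 2%:R) * P i + Q i = (3%:R * t - 4%:R) * fibonacci_poly t (1 - t) i.
Proof.
pose F i := (3%:R * t - 4%:R) * fibonacci_poly t (1 - t) i.
apply: (@eq_fibonacci_rec _ t (1 - t) (fun i => (t - 2%:R) * P i + Q i) F) => [j|j||].
- by rewrite !Qsum_Psum !PsumSS; ring.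
- by rewrite /F fibonacci_polyP; ring.
- by rewrite /F fibonacci_poly0 Qsum_Psum Psum0 Psum1; ring.
- by rewrite /F fibonacci_poly1 Qsum_Psum PsumSS Psum0 Psum1; ring.
Qed.
End PowerSums.

Section ClosedForms.
Variable t : ser.
Hypothesis t0 : t 0%N = 0.
Hypothesis t_cubic : t * (1 - t) ^+ 2 = z ^+ 3.
Local Notation w := (1 - t).

Lemma exprz_cubic i : z ^+ i * z ^+ (2 * i) = t ^+ i * (w ^+ i * w ^+ i).
Proof. by rewrite -!exprMn -expr2 t_cubic -exprM -exprD; congr (_ ^+ _); lia. Qed.

Lemma subr1_sign k : (t - 1) ^+ k = (-1) ^+ k * w ^+ k.
Proof. by rewrite -exprMn mulN1r opprB. Qed.

Lemma first_closed_form i :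
  (g i : ser) * w ^+ i.+1 * t ^+ i./2 * (t - 1) ^+ i =
  (-1) ^+ i * (z ^+ (2 * i) *
    \sum_(k < i./2.+1) (-1) ^+ k * 'C(i - k, k)%:R * (t ^+ (i./2 - k) * (t - 1) ^+ k)).
Proof.
have unsign k : (-1) ^+ k * 'C(i - k, k)%:R * (t ^+ (i./2 - k) * (t - 1) ^+ k) =
                'C(i - k, k)%:R * (t ^+ (i./2 - k) * w ^+ k) :> ser.
  rewrite subr1_sign -[RHS](signrMK k); ring.
apply: (@mulzXI i) => /=; under eq_bigr => k _ do rewrite unsign.
transitivity ((-1) ^+ i * (w ^+ i * w ^+ i) * (t ^+ i./2 * (z ^+ i * g i * w))).
  by rewrite subr1_sign exprS; ring.
rewrite gf_fibonacci // fibonacci_poly_half.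
transitivity ((-1) ^+ i * (z ^+ i * z ^+ (2 * i)) *
  \sum_(k < i./2.+1) 'C(i - k, k)%:R * (t ^+ (i./2 - k) * w ^+ k)); last by ring.
by rewrite exprz_cubic; ring.
Qed.

Lemma second_closed_form i :
  (g i : ser) * w ^+ i.+1 * (3%:R * t - 4%:R) * (t * (t - 1)) ^+ i =
  (-1) ^+ i * (z ^+ (2 * i) * ((t - 2%:R) * Psum t i + Qsum t i)).
Proof.
apply: (@mulzXI i) => /=; rewrite Psum_fibonacci.
transitivity ((-1) ^+ i * (t ^+ i * (w ^+ i * w ^+ i)) * ((3%:R * t - 4%:R) * (z ^+ i * g i * w))).
  by rewrite exprMn subr1_sign exprS; ring.
by rewrite gf_fibonacci // -exprz_cubic; ring.
Qed.

End ClosedForms.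

Theorem mainTheorem7 (t : series)
  (ht0 : t 0%N = 0)
  (ht : smul t (spow (ssub (scst 1) t) 2) = spow sz 3) :
  forall i : nat,
    smul (smul (smul (g i) (spow (ssub (scst 1) t) i.+1)) (spow t i./2))
         (spow (ssub t (scst 1)) i)
    = sscale ((-1) ^+ i) (smul (spow sz (2 * i)%N)
        (ssum (i./2).+1 (fun k =>
           sscale ((-1) ^+ k * ('C(i - k, k))%N%:Z)
             (smul (spow t (i./2 - k)%N) (spow (ssub t (scst 1)) k)))))
    /\
    smul (smul (smul (g i) (spow (ssub (scst 1) t) i.+1))
               (ssub (sscale 3 t) (scst 4)))
         (spow (smul t (ssub t (scst 1))) i)
    = sscale ((-1) ^+ i) (smul (spow sz (2 * i)%N)
        (sadd (smul (ssub t (scst 2)) (Psum t i)) (Qsum t i)))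
    /\
    (forall n : nat, ((n + i) %% 3 != 0)%N -> b n i = 0%N).
Proof.
move=> i; rewrite !sseriesE in ht *.
under eq_bigr => k _ do rewrite !sseriesE intrM intr_sign.
rewrite intr_sign; split; [|split].
- exact: first_closed_form.
- exact: second_closed_form.
- by move=> n; apply: b_mod3.
Qed.
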